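(* Let $\mathcal{M}=(S,\mathcal{I})$ be a courteously colored matroid of rank $r$ such that for every $s\in S$, the matroid $\mathcal{M}\setminus\{s\}$ (obtained by deleting $s$) is not courteously colored. Then $|S|\le 2r$, and this upper bound is sharp (for every positive integer $r$ there is such a matroid with $|S|=2r$).
   Context: A coloring of a matroid assigns a color to each element of its ground set; deletions inherit colors. For a color $c$, $\mathcal{M}_{\overline{c}}$ is the matroid obtained by deleting all elements of color $c$. A colored matroid $\mathcal{M}$ is courteously colored if for every color $c$, the rank of $\mathcal{M}_{\overline{c}}$ equals the rank of $\mathcal{M}$. *)

From mathcomp Require Import all_boot.
Set Implicit Arguments. Unset Strict Implicit. Unset Printing Implicit Defensive.

Record matroid (T : finType) := Matroid {
  ground : {set T};
  indep : {set T} -> bool }.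

Definition is_matroid (T : finType) (M : matroid T) : Prop :=
  [/\ indep M set0,
      forall I : {set T}, indep M I -> I \subset ground M,
      forall I J : {set T}, J \subset I -> indep M I -> indep M J &
      forall I J : {set T}, indep M I -> indep M J -> #|I| < #|J| ->
        exists2 x, x \in J :\: I & indep M (x |: I)].

Definition deletion (T : finType) (M : matroid T) (X : {set T}) : matroid T :=
  Matroid (ground M :\: X) (fun I => indep M I && (I \subset ground M :\: X)).

Definition rank (T : finType) (M : matroid T) : nat :=
  \max_(I : {set T} | indep M I) #|I|.

(* M colored by col (colors inherited by deletions) is courteously colored:
   deleting all elements of any one color c does not lower the rank. *)
Definition courteous (T : finType) (C : eqType) (col : T -> C)
    (M : matroid T) : Prop :=
  forall c : C, rank (deletion M [set x | col x == c]) = rank M.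

From mathcomp Require Import all_boot zify.
Set Implicit Arguments. Unset Strict Implicit. Unset Printing Implicit Defensive.

(** Fix a basis B of M. For each colour c, the independent set B minus its
    c-coloured elements extends, by repeated augmentation, to a basis of
    M \ c; the extension uses only |B ∩ c| new elements, none of colour c.
    So B together with all these extensions is a set Z with
    |Z| <= |B| + sum_c |B ∩ c| = 2r containing, for every colour, a basis
    avoiding that colour. Deleting any element outside Z therefore keeps M
    courteous, and minimality forces S = Z.
    Sharpness: r disjoint parallel pairs, the two elements of each pair
    coloured differently. *)

Lemma sum_card_fibers (T : finType) (C : eqType) (f : T -> C) (A : {set T}) :
  \sum_(c <- undup (image f A)) #|A :&: [set x | f x == c]| = #|A|.
Proof.
rewrite -sum1_card.
under eq_bigr => c _ do rewrite -sum1dep_card big_mkcond /=.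
rewrite exchange_big /=; rewrite [RHS]big_mkcond; apply: eq_bigr => x _.
case: (boolP (x \in A)) => xA /=; last by rewrite big1 // => c _; rewrite inE xA.
under eq_bigr => c _ do rewrite inE eq_sym.
rewrite -big_mkcond sum1_count count_uniq_mem ?undup_uniq //.
by rewrite mem_undup image_f.
Qed.

Section Rank.
Variable T : finType.
Implicit Types (M : matroid T) (A B I : {set T}).

Lemma indep_leq_rank M I : indep M I -> #|I| <= rank M.
Proof. exact: (@leq_bigmax_cond _ (indep M) (fun I : {set T} => #|I|)). Qed.

Lemma rank_leq M n : (forall I, indep M I -> #|I| <= n) -> rank M <= n.
Proof. by move/bigmax_leqP. Qed.

Lemma rank_attained M : indep M set0 -> exists2 B, indep M B & #|B| = rank M.
Proof.
move=> M0; have [|B MB maxB] := @eq_bigmax_cond _ (indep M) (fun I => #|I|).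
  by apply/card_gt0P; exists set0.
by exists B; last exact: esym maxB.
Qed.

Lemma rank_deletion_leq M X : rank (deletion M X) <= rank M.
Proof. by apply: rank_leq => I /andP[MI _]; apply: indep_leq_rank. Qed.

Definition has_basis_in M A :=
  exists B, [/\ indep M B, B \subset A & #|B| = rank M].

Lemma has_basis_inS M A A' :
  A \subset A' -> has_basis_in M A -> has_basis_in M A'.
Proof.
by move=> sAA' [B [MB sBA cardB]]; exists B; split=> //; apply: subset_trans sAA'.
Qed.

Variables (C : eqType) (col : T -> C).

Lemma courteous_has_basis_in M :
  indep M set0 -> courteous col M ->
  forall c, has_basis_in M (ground M :\: [set x | col x == c]).
Proof.
move=> M0 M_courteous c.
have [|B /andP[MB sB] cardB] := @rank_attained (deletion M [set x | col x == c]).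
  by rewrite /= M0 sub0set.
by exists B; rewrite cardB (M_courteous c).
Qed.

Lemma courteous_deletion M Y :
  (forall c, has_basis_in M ((ground M :\: Y) :\: [set x | col x == c])) ->
  courteous col (deletion M Y).
Proof.
move=> basisY c; apply/eqP; rewrite eqn_leq rank_deletion_leq /=.
have [B [MB sB cardB]] := basisY c.
apply: leq_trans (rank_deletion_leq _ _) _; rewrite -cardB; apply: indep_leq_rank.
by rewrite /= MB sB (subset_trans sB (subsetDl _ _)).
Qed.

End Rank.

Section Matroid.
Variables (T : finType) (M : matroid T).
Hypothesis M_matroid : is_matroid M.

Lemma indep_extend I J : indep M I -> indep M J -> #|I| <= #|J| ->
  exists F : {set T},
    [/\ F \subset J :\: I, indep M (I :|: F) & #|I :|: F| = #|J|].
Proof.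
have [k] := ubnP (#|J| - #|I|); elim: k I => // k IH I ltJI MI MJ leIJ.
case: (ltngtP #|I| #|J|) leIJ => // [ltIJ _ | eqIJ _]; last first.
  by exists set0; rewrite sub0set setU0.
case: M_matroid => _ _ _ /(_ I J MI MJ ltIJ)[x /setDP[xJ xI] MxI].
have cardxI : #|x |: I| = #|I|.+1 by rewrite cardsU1 xI.
have [||F [sF MF cardF]] := IH (x |: I) _ MxI MJ _; rewrite ?cardxI //; first lia.
exists (x |: F); rewrite setUCA setUA; split=> //.
rewrite subUset sub1set inE xJ xI /=; apply: subset_trans sF _.
by apply: setDS; apply: subsetUr.
Qed.

Section Courteous.
Variables (C : eqType) (col : T -> C).
Local Notation X c := [set x | col x == c].
Hypothesis M_courteous : courteous col M.

Section Repair.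
Variable B : {set T}.
Hypotheses (MB : indep M B) (cardB : #|B| = rank M).

Lemma basis_repair c : exists F : {set T}, [/\ F \subset ground M :\: X c,
  #|F| <= #|B :&: X c| & has_basis_in M ((B :\: X c) :|: F)].
Proof.
case: (M_matroid) => M0 _ indep_sub _.
have [J [MJ sJ cardJ]] := courteous_has_basis_in M0 M_courteous c.
have MI : indep M (B :\: X c) by apply: indep_sub MB; apply: subsetDl.
have [|F [sF MIF cardIF]] := indep_extend MI MJ.
  by rewrite cardJ -cardB subset_leq_card ?subsetDl.
have disjIF : (B :\: X c) :&: F = set0.
  apply/setP => x; rewrite in_set0.
  by apply/negbTE/setIP => -[xI /(subsetP sF)/setDP[_]]; rewrite xI.
exists F; split.
- by apply: subset_trans sF _; apply: subset_trans sJ; apply: subsetDl.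
- have := cardsUI (B :\: X c) F; rewrite disjIF cards0 addn0 cardIF cardJ -cardB.
  by rewrite -(cardsID (X c) B) addnC => /eqP; rewrite eqn_add2l => /eqP->.
- by exists ((B :\: X c) :|: F); split; rewrite // cardIF.
Qed.

Lemma basis_repair_seq (cs : seq C) : exists Z : {set T}, [/\ Z \subset ground M,
  #|Z| <= \sum_(c <- cs) #|B :&: X c| &
  forall c, c \in cs -> has_basis_in M ((B :|: Z) :\: X c)].
Proof.
elim: cs => [|c cs [Z [sZ cardZ basisZ]]].
  by exists set0; rewrite sub0set cards0.
have [F [sF cardF basisF]] := basis_repair c.
exists (F :|: Z); split.
- by rewrite subUset sZ andbT; apply: subset_trans sF (subsetDl _ _).
- rewrite big_cons; apply: leq_trans (leq_card_setU F Z).1 _.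
  exact: leq_add cardF cardZ.
move=> d; rewrite inE => /predU1P[-> | /basisZ basis_d].
  apply: has_basis_inS basisF; apply/subsetP => x.
  rewrite !inE => /orP[/andP[-> ->] // | xF].
  by have := subsetP sF x xF; rewrite !inE => /andP[-> _]; rewrite xF !orbT.
by apply: has_basis_inS basis_d; apply/setSD/setUS/subsetUr.
Qed.

End Repair.

Lemma courteous_basis_cover : exists Z : {set T}, [/\ Z \subset ground M,
  #|Z| <= 2 * rank M & forall c, has_basis_in M (Z :\: X c)].
Proof.
case: (M_matroid) => M0 indep_ground _ _.
have [B MB cardB] := rank_attained M0.
have [Z [sZ cardZ basisZ]] := basis_repair_seq MB cardB (undup (image col B)).
exists (B :|: Z); split.
- by rewrite subUset sZ indep_ground.
- rewrite sum_card_fibers in cardZ.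
  apply: leq_trans (leq_card_setU B Z).1 _.
  by rewrite -cardB mul2n -addnn leq_add2l.
move=> c; have [/basisZ // | c_notin] := boolP (c \in undup (image col B)).
exists B; split=> //; apply/subsetP => x xB; rewrite !inE xB andbT.
by apply: contraNneq c_notin => <-; rewrite mem_undup image_f.
Qed.

End Courteous.

Theorem card_ground_leq_2rank (C : eqType) (col : T -> C) :
  courteous col M ->
  (forall s, s \in ground M -> ~ courteous col (deletion M [set s])) ->
  #|ground M| <= 2 * rank M.
Proof.
move=> M_courteous minimal.
have [Z [sZ cardZ basisZ]] := courteous_basis_cover M_courteous.
rewrite leqNgt; apply/negP => lt2r.
have /set0Pn[s /setDP[sS sZn]] : ground M :\: Z != set0.
  rewrite setD_eq0; apply: contraL lt2r => /subset_leq_card leSZ.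
  by rewrite -leqNgt (leq_trans leSZ cardZ).
apply: (minimal s sS); apply: courteous_deletion => c.
apply: has_basis_inS (basisZ c); apply: setSD; apply/subsetP => x xZ.
by rewrite !inE (subsetP sZ x xZ) andbT; apply: contraNneq sZn => <-.
Qed.

End Matroid.

Section UnitPartitionMatroid.
Variables (T K : finType) (p : T -> K).

Definition unit_partition_matroid : matroid T :=
  Matroid [set: T] (fun I => #|p @: I| == #|I|).

Lemma unit_partition_matroidP : is_matroid unit_partition_matroid.
Proof.
split=> /= [|I _|I J sJI /imset_injP injI|I J /eqP cardI /eqP cardJ ltIJ].
- by rewrite imset0 !cards0.
- exact: subsetT.
- by apply/imset_injP; apply: sub_in2 injI; apply/subsetP.
have /subsetPn[_ /imsetP[x xJ ->] pxI] : ~~ (p @: J \subset p @: I).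
  by apply: contraTN ltIJ => /subset_leq_card; rewrite cardI cardJ leqNgt.
have xI : x \notin I by apply: contra pxI; apply: imset_f.
by exists x; rewrite ?inE ?xJ ?andbT // imsetU1 !cardsU1 pxI xI cardI.
Qed.

Lemma unit_partition_indep_leq I : indep unit_partition_matroid I -> #|I| <= #|K|.
Proof. by move/eqP <-; apply: max_card. Qed.

End UnitPartitionMatroid.

Section ParallelPairs.
Variable r : nat.
Local Notation T := (bool * 'I_r)%type.
Local Notation M := (unit_partition_matroid (@snd bool 'I_r)).

Definition parallel_side (b : bool) : {set T} := setX [set b] [set: 'I_r].

Lemma card_parallel_side b : #|parallel_side b| = r.
Proof. by rewrite cardsX cards1 cardsT card_ord mul1n. Qed.

Lemma indep_parallel_side b : indep M (parallel_side b).
Proof.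
apply/imset_injP => -[b1 i] [b2 j]; rewrite !inE /=.
by move=> /andP[/eqP-> _] /andP[/eqP-> _] /= ->.
Qed.

Lemma rank_parallel_pairs : rank M = r.
Proof.
apply/eqP; rewrite eqn_leq; apply/andP; split.
  by apply: rank_leq => I /unit_partition_indep_leq; rewrite card_ord.
rewrite -[X in X <= _](card_parallel_side true).
exact: indep_leq_rank (indep_parallel_side true).
Qed.

Lemma courteous_parallel_pairs : courteous (@fst bool 'I_r) M.
Proof.
move=> c; apply/eqP; rewrite eqn_leq rank_deletion_leq rank_parallel_pairs /=.
rewrite -[X in X <= _](card_parallel_side (~~ c)) indep_leq_rank //.
apply/andP; split; first exact: indep_parallel_side.
by apply/subsetP => -[b i]; rewrite !inE /= andbT => /eqP->; case: c.
Qed.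

Lemma parallel_pairs_minimal s :
  s \in ground M -> ~ courteous (@fst bool 'I_r) (deletion M [set s]).
Proof.
move=> _ /(_ (~~ s.1)) courteous_s.
have s_side : s \in parallel_side s.1 by rewrite !inE eqxx.
have le_rank_del :
    rank (deletion (deletion M [set s]) [set x | x.1 == ~~ s.1]) <= r.-1.
  apply: rank_leq => I /andP[_ sI].
  have sI_side : I \subset parallel_side s.1 :\ s.
    apply/subsetP => x /(subsetP sI); rewrite !inE andbT => /andP[x1 ->].
    by move: x1; case: (x.1); case: (s.1).
  apply: leq_trans (subset_leq_card sI_side) _.
  have := cardsD1 s (parallel_side s.1).
  by rewrite s_side card_parallel_side add1n => /(congr1 predn) ->.
have ge_rank_del : r <= rank (deletion M [set s]).
  rewrite -[X in X <= _](card_parallel_side (~~ s.1)) indep_leq_rank //.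
  apply/andP; split; first exact: indep_parallel_side.
  apply/subsetP => x; rewrite !inE !andbT => /eqP x1; apply/eqP => xs.
  by move: x1; rewrite xs; case: (s.1).
rewrite courteous_s -subn1 in le_rank_del.
have := ltn_ord s.2; lia.
Qed.

End ParallelPairs.

Theorem corollary3p8 :
  (forall (T : finType) (C : eqType) (M : matroid T) (col : T -> C),
      is_matroid M ->
      courteous col M ->
      (forall s, s \in ground M -> ~ courteous col (deletion M [set s])) ->
      #|ground M| <= 2 * rank M)
  /\
  (forall r : nat, 0 < r ->
     exists (T : finType) (C : eqType) (M : matroid T) (col : T -> C),
       [/\ is_matroid M, rank M = r,
           courteous col M,
           (forall s, s \in ground M -> ~ courteous col (deletion M [set s])) &
           #|ground M| = 2 * r]).
Proof.
split=> [T C M col M_matroid | r _]; first exact: card_ground_leq_2rank.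
exists (bool * 'I_r)%type, bool, (unit_partition_matroid (@snd bool 'I_r)), fst.
split.
- exact: unit_partition_matroidP.
- exact: rank_parallel_pairs.
- exact: courteous_parallel_pairs.
- exact: parallel_pairs_minimal.
- by rewrite cardsT card_prod card_bool card_ord.
Qed.
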